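(* Let $n\ge1$, let $f_1,\dots,f_n:\mathbb{R}^d\to\mathbb{R}$ be $L$-smooth (i.e. $\|\nabla f_i(x)-\nabla f_i(y)\|\le L\|x-y\|$ for all $x,y$), and $f=\frac1n\sum_i f_i$. Let $x_0,\dots,x_T$ and $\nabla_0,\dots,\nabla_{T-1}$ be the iterates and gradient estimators produced by AdaSpider (described in the context) with input $x_0$, $\beta_0>0$, $G_0>0$. Then there is an absolute constant $C>0$ such that \[ \mathbb{E}\Big[\sum_{t=0}^{T-1}\|\nabla_t-\nabla f(x_t)\|\Big]\le C\,\frac{L\,n^{1/4}\sqrt T}{\beta_0}\sqrt{\log\!\Big(1+nT\Big(\frac{L}{\beta_0G_0}+\frac{\|\nabla f(x_0)\|}{G_0}\Big)\Big)}. \]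
   Context: $\|\cdot\|$ is the Euclidean norm. AdaSpider: input $x_0\in\mathbb{R}^d$, $\beta_0>0$, $G_0>0$, horizon $T\ge1$. For $t=0,1,\dots,T-1$: if $t \bmod n=0$, set $\nabla_t:=\nabla f(x_t)$; otherwise pick $i_t\in\{1,\dots,n\}$ uniformly at random (independently of the past) and set $\nabla_t:=\nabla f_{i_t}(x_t)-\nabla f_{i_t}(x_{t-1})+\nabla_{t-1}$. Then set $\gamma_t:=1\big/\big(n^{1/4}\beta_0\sqrt{n^{1/2}G_0^2+\sum_{s=0}^t\|\nabla_s\|^2}\big)$ and $x_{t+1}:=x_t-\gamma_t\nabla_t$. *)

From HB Require Import structures.
From mathcomp Require Import all_boot all_order all_algebra.
From mathcomp Require Import all_classical all_reals all_analysis.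
Set Implicit Arguments. Unset Strict Implicit. Unset Printing Implicit Defensive.
Import Order.TTheory GRing.Theory Num.Theory.
Import numFieldNormedType.Exports.
Local Open Scope ring_scope.

Section AdaSpider.
Variables (R : realType) (d n : nat).

Definition enorm (v : 'rV[R]_d) : R := Num.sqrt (\sum_(j < d) v 0 j ^+ 2).

Definition edot (u v : 'rV[R]_d) : R := \sum_(j < d) u 0 j * v 0 j.

Definition full_grad (g : 'I_n -> 'rV[R]_d -> 'rV[R]_d) (x : 'rV[R]_d) :
  'rV[R]_d := (n%:R)^-1 *: \sum_(i < n) g i x.

(* step size gamma_t from S_t = sum_{s<=t} ||nabla_s||^2 *)
Definition ada_gamma (beta0 G0 Ssum : R) : R :=
  1 / (n%:R `^ (4^-1) * beta0 * Num.sqrt (Num.sqrt n%:R * G0 ^+ 2 + Ssum)).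

Variables (T : nat) (g : 'I_n -> 'rV[R]_d -> 'rV[R]_d)
  (x0 : 'rV[R]_d) (beta0 G0 : R) (omega : {ffun 'I_T -> 'I_n}).

(* ada_run t = (x_t, nabla_t, S_t); omega k is the random index i_k
   (only used when k mod n <> 0, k < T). *)
Fixpoint ada_run (t : nat) : 'rV[R]_d * 'rV[R]_d * R :=
  match t with
  | 0 => let g0 := full_grad g x0 in (x0, g0, enorm g0 ^+ 2)
  | t'.+1 =>
      let: (x, gr, Ssum) := ada_run t' in
      let x' := x - ada_gamma beta0 G0 Ssum *: gr in
      let gr' :=
        if (t'.+1 %% n == 0)%N then full_grad g x'
        else match @insub nat (fun k => k < T)%N _ t'.+1 : option 'I_T with
             | Some k => g (omega k) x' - g (omega k) x + gr
             | None => full_grad g x'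
             end in
      (x', gr', Ssum + enorm gr' ^+ 2)
  end.

Definition ada_x (t : nat) : 'rV[R]_d := (ada_run t).1.1.
Definition ada_est (t : nat) : 'rV[R]_d := (ada_run t).1.2.

End AdaSpider.

(* Expectation w.r.t. i.i.d. uniform indices i_0..i_{T-1} in {1..n}
   (= uniform distribution on {ffun 'I_T -> 'I_n}) *)
Definition unif_expect {R : realType} (T n : nat)
  (X : {ffun 'I_T -> 'I_n} -> R) : R :=
  (#|{ffun 'I_T -> 'I_n}|%:R)^-1 * \sum_(w : {ffun 'I_T -> 'I_n}) X w.

From HB Require Import structures.
From mathcomp Require Import all_boot all_order all_algebra perm.
From mathcomp Require Import all_classical all_reals all_analysis.
From mathcomp Require Import ring lra.
Import Order.TTheory GRing.Theory Num.Theory.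
Local Open Scope ring_scope.
Set Implicit Arguments. Unset Strict Implicit. Unset Printing Implicit Defensive.

(** Write [e_t] for the estimator error [nabla_t - grad f (x_t)].  It vanishes
    at every restart [t = 0 mod n]; in between, [e_t] receives the increment
    [g_i(x_t) - g_i(x_(t-1)) - (grad f(x_t) - grad f(x_(t-1)))] with a fresh
    uniform index [i], which is centred and independent of [e_(t-1)].  Hence
    [E|e_t|^2 <= E|e_(t-1)|^2 + L^2 E|x_t - x_(t-1)|^2], and summing over the at
    most [n] steps of an epoch gives
    [sum_t E|e_t|^2 <= L^2 n sum_t E|x_(t+1) - x_t|^2].
    With the AdaGrad step size, [|x_(t+1) - x_t|^2] equals
    [|nabla_t|^2 / (c + S_t)] up to the factor [1 / (sqrt n beta0^2)], where
    [c = sqrt n G0^2] and [S_t = sum_(s <= t) |nabla_s|^2]; along every run these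
    ratios sum to at most [ln (1 + S_(T-1) / c)].  That logarithm is bounded
    self-consistently: [|nabla_t| <= |grad f(x_0)| + L * (path length)], and by
    Cauchy-Schwarz the path length is at most [sqrt (T * log) / beta0]; with
    [ln (1 + X) <= 2 sqrt X] this closes into
    [log <= 8 ln (1 + n T (L / (beta0 G0) + |grad f(x_0)| / G0))].  A last
    Cauchy-Schwarz, over [t] and over the index sequences, turns the bound on
    second moments into the stated first-moment bound. *)

Section Euclid.
Variables (R : realType) (d : nat).
Implicit Types (u v w : 'rV[R]_d).

Lemma edotC u v : edot u v = edot v u.
Proof. by apply: eq_bigr => j _; rewrite mulrC. Qed.

Lemma edotDr u v w : edot u (v + w) = edot u v + edot u w.
Proof. by rewrite -big_split; apply: eq_bigr => j _; rewrite mxE mulrDr. Qed.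

Lemma edotZr u c v : edot u (c *: v) = c * edot u v.
Proof. by rewrite mulr_sumr; apply: eq_bigr => j _; rewrite mxE mulrCA. Qed.

Lemma edotNr u v : edot u (- v) = - edot u v.
Proof. by rewrite -scaleN1r edotZr mulN1r. Qed.

Lemma edot0r u : edot u 0 = 0.
Proof. by rewrite -(scale0r 0) edotZr mul0r. Qed.

Lemma edot_sumr (I : Type) (r : seq I) (P : pred I) u (F : I -> 'rV[R]_d) :
  edot u (\sum_(i <- r | P i) F i) = \sum_(i <- r | P i) edot u (F i).
Proof.
rewrite /edot exchange_big; apply: eq_bigr => j _.
by rewrite summxE mulr_sumr.
Qed.

Lemma enorm_sqr v : enorm v ^+ 2 = edot v v.
Proof.
rewrite sqr_sqrtr; last by apply: sumr_ge0 => j _; exact: sqr_ge0.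
by apply: eq_bigr => j _; rewrite expr2.
Qed.

Lemma enorm_ge0 v : 0 <= enorm v.
Proof. exact: sqrtr_ge0. Qed.

Lemma enormZ c v : enorm (c *: v) = `|c| * enorm v.
Proof.
rewrite -sqrtr_sqr -sqrtrM ?sqr_ge0 // mulr_sumr.
by congr Num.sqrt; apply: eq_bigr => j _; rewrite mxE exprMn.
Qed.

Lemma enormN v : enorm (- v) = enorm v.
Proof. by rewrite -scaleN1r enormZ normrN1 mul1r. Qed.

Lemma enorm0 : enorm (0 : 'rV[R]_d) = 0.
Proof. by rewrite -(scale0r 0) enormZ normr0 mul0r. Qed.

Lemma enorm_sqrD u v :
  enorm (u + v) ^+ 2 = enorm u ^+ 2 + 2 * edot u v + enorm v ^+ 2.
Proof.
rewrite !enorm_sqr edotDr ![edot (u + v) _]edotC !edotDr (edotC v u); ring.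
Qed.

Lemma enorm_eq0 v : (enorm v == 0) = (v == 0).
Proof.
apply/idP/eqP => [|->]; last by rewrite enorm0.
rewrite -sqrf_eq0 enorm_sqr psumr_eq0 => [/allP v0|j _]; last by rewrite -expr2 sqr_ge0.
apply/rowP => j; rewrite mxE; apply/eqP.
by have := v0 j (mem_index_enum j); rewrite mulf_eq0 orbb.
Qed.

Lemma edot_le u v : edot u v <= enorm u * enorm v.
Proof.
have [->|u0] := eqVneq u 0; first by rewrite edotC edot0r enorm0 mul0r.
have [->|v0] := eqVneq v 0; first by rewrite edot0r enorm0 mulr0.
have a0 : 0 < enorm u by rewrite lt_def enorm_eq0 u0 enorm_ge0.
have b0 : 0 < enorm v by rewrite lt_def enorm_eq0 v0 enorm_ge0.
set a := enorm u; set b := enorm v.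
have expand : enorm (b *: u - a *: v) ^+ 2 = 2 * (a * b) * (a * b - edot u v).
  rewrite enorm_sqrD edotNr edotZr edotC edotZr enormN !enormZ !ger0_norm ?enorm_ge0 //.
  rewrite (edotC v u) -/a -/b; ring.
have := sqr_ge0 (enorm (b *: u - a *: v)); rewrite expand.
have := mulr_gt0 a0 b0; move: (a * b) (edot u v) => p e; nra.
Qed.

Lemma enormD u v : enorm (u + v) <= enorm u + enorm v.
Proof.
rewrite -(ler_pXn2r (n := 2)) ?nnegrE ?addr_ge0 ?enorm_ge0 //.
rewrite enorm_sqrD sqrrD lerD2r lerD2l mulr2n; have := edot_le u v; lra.
Qed.

Lemma ler_enorm_sum (I : Type) (r : seq I) (P : pred I) (F : I -> 'rV[R]_d) :
  enorm (\sum_(i <- r | P i) F i) <= \sum_(i <- r | P i) enorm (F i).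
Proof.
elim/big_rec2: _ => [|i y1 y2 _ h]; first by rewrite enorm0.
by apply: le_trans (enormD _ _) _; rewrite lerD2l.
Qed.

Lemma sum_enorm_sqr_centered (n : nat) (u : 'I_n -> 'rV[R]_d) :
  \sum_i enorm (u i - n%:R^-1 *: \sum_j u j) ^+ 2 <= \sum_i enorm (u i) ^+ 2.
Proof.
case: n u => [|n] u; first by rewrite !big_ord0.
set m := _ *: _.
have sum_u : \sum_j u j = n.+1%:R *: m by rewrite scalerA mulfV // scale1r.
under eq_bigr => i _ do rewrite enorm_sqrD edotNr enormN edotC.
rewrite !big_split /= -mulr_sumr sumrN -edot_sumr sum_u edotZr sumr_const card_ord.
rewrite -enorm_sqr -mulr_natl.
have := sqr_ge0 (enorm m); have : 0 <= n.+1%:R :> R by []; nra.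
Qed.

End Euclid.

Lemma sum_sqrt_le (R : realType) (I : finType) (a : I -> R) :
  (forall i, 0 <= a i) ->
  \sum_i Num.sqrt (a i) <= Num.sqrt (#|I|%:R * \sum_i a i).
Proof.
move=> a_ge0.
pose u : 'rV[R]_#|I| := const_mx 1.
pose v : 'rV[R]_#|I| := \row_k Num.sqrt (a (enum_val k)).
have uv : edot u v = \sum_(k < #|I|) Num.sqrt (a (enum_val k)).
  by apply: eq_bigr => k _; rewrite !mxE mul1r.
have nu : enorm u = Num.sqrt #|I|%:R.
  by congr Num.sqrt; under eq_bigr => k _ do rewrite mxE expr1n; rewrite sumr_const card_ord.
have nv : enorm v = Num.sqrt (\sum_(k < #|I|) a (enum_val k)).
  by congr Num.sqrt; apply: eq_bigr => k _; rewrite mxE sqr_sqrtr.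
have := edot_le u v; rewrite uv nu nv -sqrtrM //.
by rewrite -big_enum_val -(big_enum_val (fun i => Num.sqrt (a i))).
Qed.

Section Resampling.
Variables (R : realType) (n T : nat).
Local Notation W := {ffun 'I_T -> 'I_n}.

Definition resample (w : W) (t : 'I_T) (j : 'I_n) : W :=
  [ffun s => if s == t then j else w s].

Lemma resample_at w t j : resample w t j t = j.
Proof. by rewrite ffunE eqxx. Qed.

Lemma resample_id w t : resample w t (w t) = w.
Proof. by apply/ffunP => s; rewrite ffunE; case: eqP => // ->. Qed.

Lemma resampleK w t j j' : resample (resample w t j) t j' = resample w t j'.
Proof. by apply/ffunP => s; rewrite !ffunE; case: eqP. Qed.

Lemma sum_at_eq (t : 'I_T) (H : W -> R) (i k : 'I_n) :
  (forall w j, H (resample w t j) = H w) ->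
  \sum_(w : W | w t == i) H w = \sum_(w : W | w t == k) H w.
Proof.
move=> H_resample.
pose swap w := resample w t (tperm i k (w t)).
have swapK : involutive swap.
  by move=> w; rewrite /swap resampleK resample_at tpermK resample_id.
rewrite (reindex_inj (inv_inj swapK)); apply: eq_big => [w|w _].
  by rewrite /swap resample_at -[X in _ == X](tpermR i k) (can_eq (tpermK i k)).
by rewrite H_resample.
Qed.

Lemma sum_partition_at (t : 'I_T) (F : W -> R) :
  \sum_(w : W) F w = \sum_i \sum_(w : W | w t == i) F w.
Proof. exact: partition_big. Qed.

Lemma sum_resampled (t : 'I_T) (G : W -> 'I_n -> R) : (0 < n)%N ->
  (forall w j i, G (resample w t j) i = G w i) ->
  \sum_(w : W) G w (w t) = n%:R^-1 * \sum_(w : W) \sum_i G w i.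
Proof.
move=> n_gt0 G_resample.
have sum_at i : \sum_(w : W) G w i = n%:R * \sum_(w : W | w t == i) G w i.
  rewrite (sum_partition_at t) mulr_natl -[n in _ *+ n]card_ord -sumr_const.
  by apply: eq_bigr => k _; apply: sum_at_eq => w j; exact: G_resample.
rewrite exchange_big mulr_sumr (sum_partition_at t); apply: eq_bigr => i _.
rewrite sum_at mulKf ?pnatr_eq0 -?lt0n //.
by apply: eq_bigr => w /eqP ->.
Qed.

End Resampling.

Section RealFacts.
Variable R : realType.

Lemma ln_div_ge (p q : R) : 0 < p -> p <= q -> (q - p) / q <= ln (q / p).
Proof.
move=> p_gt0 le_pq; have q_gt0 := lt_le_trans p_gt0 le_pq.
have r_gt0 : 0 < p / q by rewrite divr_gt0.
have : ln (p / q) <= p / q - 1.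
  by have := @le_ln1Dx R (p / q - 1); rewrite addrCA subrr addr0; apply; lra.
by rewrite mulrBl mulfV ?gt_eqF // -[q / p]invf_div lnV ?posrE //; lra.
Qed.

Lemma sum_incr_div_le_ln (b : nat -> R) m : 0 < b 0%N -> (forall k, b k <= b k.+1) ->
  \sum_(k < m) (b k.+1 - b k) / b k.+1 <= ln (b m / b 0%N).
Proof.
move=> b0_gt0 b_incr.
have b_gt0 k : 0 < b k by elim: k => // k IH; exact: lt_le_trans IH (b_incr k).
rewrite ln_div ?posrE // -(telescope_sumr (fun k => ln (b k)) (leq0n m)) big_mkord.
by apply: ler_sum => k _; rewrite -ln_div ?posrE // ln_div_ge.
Qed.

Lemma ln1D_le_2sqrt (X : R) : 0 <= X -> ln (1 + X) <= 2 * Num.sqrt X.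
Proof.
move=> X_ge0; have z_ge0 := sqrtr_ge0 X; have zX := sqr_sqrtr X_ge0.
move: (Num.sqrt X) z_ge0 zX => z z_ge0 <-.
apply: (@le_trans _ _ (ln ((1 + z) ^+ 2))); first by rewrite ler_ln ?posrE; nra.
by rewrite lnXn ?mulr2n; have := @le_ln1Dx R z; lra.
Qed.

Lemma ln_self_bound (X y : R) : 0 <= X -> 0 <= y ->
  X <= 2 * y ^+ 2 * (1 + ln (1 + X)) -> ln (1 + X) <= 8 * ln (1 + y).
Proof.
move=> X_ge0 y_ge0 X_le; have l_le := ln1D_le_2sqrt X_ge0.
have z_ge0 := sqrtr_ge0 X; have zX := sqr_sqrtr X_ge0.
move: (Num.sqrt X) z_ge0 zX l_le => z z_ge0 zX l_le.
have z_quad : z ^+ 2 <= 2 * y ^+ 2 + 4 * y ^+ 2 * z.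
  by rewrite zX; apply: le_trans X_le _; have := sqr_ge0 y; nra.
have z_le : z <= 4 * y ^+ 2 + 2 * y.
  rewrite leNgt; apply/negP => z_gt.
  have : 0 < (z - (4 * y ^+ 2 + 2 * y)) * z by apply: mulr_gt0; nra.
  have : 0 <= y * (z - 2 * y) by apply: mulr_ge0; nra.
  nra.
have poly : 1 + (4 * y ^+ 2 + 2 * y) ^+ 2 <= (1 + y) ^+ 8.
  rewrite -subr_ge0 (_ : _ - _ = 8 * y + 24 * y ^+ 2 + 40 * y ^+ 3 + 54 * y ^+ 4 +
    56 * y ^+ 5 + 28 * y ^+ 6 + 8 * y ^+ 7 + y ^+ 8); last by ring.
  by rewrite !addr_ge0 ?mulr_ge0 ?exprn_ge0.
have y1_gt0 : 0 < 1 + y by lra.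
rewrite mulr_natl -lnXn // ler_ln ?posrE ?exprn_gt0 //; last lra.
by apply: le_trans poly; rewrite -zX lerD2l lerXn2r ?nnegrE //; nra.
Qed.

Lemma powR_quarter_sqr (x : R) : 0 <= x -> (x `^ 4^-1) ^+ 2 = Num.sqrt x.
Proof.
move=> x_ge0; have -> : 4^-1 = 2^-1 * 2^-1 :> R by rewrite -invfM; congr _^-1; ring.
by rewrite powRrM !powR12_sqrt ?sqr_sqrtr ?sqrtr_ge0.
Qed.

Lemma affine_sqrt_sqr_le (T a b y r : R) : 1 <= T -> 0 <= a -> 0 <= b -> 0 <= r ->
  T * a <= y -> T * b <= y -> T * (a + b * Num.sqrt (T * r)) ^+ 2 <= 2 * y ^+ 2 * (1 + r).
Proof.
move=> T_ge1 a_ge0 b_ge0 r_ge0 Ta_le Tb_le; have Tr_ge0 : 0 <= T * r by nra.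
have := sqr_sqrtr Tr_ge0; have := sqrtr_ge0 (T * r).
move: (Num.sqrt (T * r)) => s s_ge0 sE.
have Ta2 : T * a ^+ 2 <= y ^+ 2.
  apply: (@le_trans _ _ ((T * a) ^+ 2)); last by rewrite lerXn2r ?nnegrE //; nra.
  rewrite -subr_ge0 (_ : _ - _ = (T - 1) * T * a ^+ 2); last by ring.
  by rewrite !mulr_ge0 ?sqr_ge0 //; lra.
have Tb2 : (T * b) ^+ 2 <= y ^+ 2 by rewrite lerXn2r ?nnegrE //; nra.
have : T * (a - b * s) ^+ 2 >= 0 by rewrite mulr_ge0 ?sqr_ge0 //; lra.
nra.
Qed.

End RealFacts.

Section Run.
Variables (R : realType) (d n T : nat) (g : 'I_n -> 'rV[R]_d -> 'rV[R]_d)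
  (x0 : 'rV[R]_d) (beta0 G0 : R).
Local Notation W := {ffun 'I_T -> 'I_n}.
Local Notation run := (ada_run g x0 beta0 G0).
Local Notation x := (ada_x g x0 beta0 G0).
Local Notation est := (ada_est g x0 beta0 G0).

Definition ada_sum_sq (w : W) t := (run w t).2.
Local Notation S := ada_sum_sq.
Implicit Types (w : W) (t : nat).

Lemma ada_xS w t : x w t.+1 = x w t - ada_gamma n beta0 G0 (S w t) *: est w t.
Proof. by rewrite /ada_x /ada_est /S /=; case: (run w t) => [[]]. Qed.

Lemma ada_estS w t : est w t.+1 =
  if (t.+1 %% n == 0)%N then full_grad g (x w t.+1)
  else if insub t.+1 is Some k then g (w k) (x w t.+1) - g (w k) (x w t) + est w t
  else full_grad g (x w t.+1).
Proof. by rewrite /ada_x /ada_est /=; case: (run w t) => [[]]. Qed.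

Lemma ada_sum_sqE w t : S w t = \sum_(s < t.+1) enorm (est w s) ^+ 2.
Proof.
elim: t => [|t IH]; first by rewrite big_ord1.
by rewrite big_ord_recr -IH /S /ada_est /=; case: (run w t) => [[]].
Qed.

Lemma ada_run_resample w (k : 'I_T) j t : (t < k)%N -> run (resample w k j) t = run w t.
Proof.
elim: t => [//|t IH] lt_tk; rewrite /= IH ?(ltnW lt_tk) //.
case: (run w t) => [[xt et] st]; case: insubP => [k' _ k'E|] //=.
by rewrite ffunE -val_eqE k'E (ltn_eqF lt_tk).
Qed.

Lemma ada_x_resample w (k : 'I_T) j t : (t <= k)%N -> x (resample w k j) t = x w t.
Proof. by case: t => [//|t] le_tk; rewrite !ada_xS /ada_x /ada_est /S ada_run_resample. Qed.

End Run.

Lemma sum_shift_le (R : realType) (F : nat -> R) (k m : nat) : (forall t, 0 <= F t) ->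
  \sum_(t < m) (if (k <= t)%N then F (t - k)%N else 0) <= \sum_(t < m) F t.
Proof.
move=> F_ge0.
have -> : \sum_(t < m) (if (k <= t)%N then F (t - k)%N else 0) = \sum_(t < m - k) F t.
  elim: m => [|m IH]; first by rewrite !big_ord0.
  rewrite big_ord_recr /= IH; case: (leqP k m) => km; first by rewrite subSn // big_ord_recr.
  by rewrite addr0 (eqP (ltnW km)) (eqP km).
rewrite (big_ord_widen m F (leq_subr k m)) big_mkcond /=.
by apply: ler_sum => t _; case: ifP.
Qed.

Section Variance.
Variables (R : realType) (d n T : nat) (g : 'I_n -> 'rV[R]_d -> 'rV[R]_d)
  (x0 : 'rV[R]_d) (beta0 G0 L : R).
Hypothesis n_gt0 : (0 < n)%N.
Hypothesis g_lip : forall i x y, enorm (g i x - g i y) <= L * enorm (x - y).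
Local Notation W := {ffun 'I_T -> 'I_n}.
Local Notation x := (ada_x g x0 beta0 G0).
Local Notation est := (ada_est g x0 beta0 G0).
Implicit Types (w : W) (t : nat).

(* Sums over [W] are [#|W|] times expectations over the uniformly random
   index sequence. *)
Definition est_err w t := est w t - full_grad g (x w t).
Definition sum_sq_err t := \sum_(w : W) enorm (est_err w t) ^+ 2.
(* Vanishes at [t = 0], where [t.-1 = 0]. *)
Definition sum_sq_move t := \sum_(w : W) enorm (x w t - x w t.-1) ^+ 2.
Definition grad_incr w t i := g i (x w t.+1) - g i (x w t).

Lemma full_gradB y z :
  full_grad g y - full_grad g z = n%:R^-1 *: \sum_i (g i y - g i z).
Proof. by rewrite /full_grad -scalerBr sumrB. Qed.

Lemma est_err_restart w t : (t %% n == 0)%N -> est_err w t = 0.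
Proof. by case: t => [|t] h; rewrite /est_err ?ada_estS ?h subrr. Qed.

Lemma est_errS w t (k : 'I_T) : val k = t.+1 -> (t.+1 %% n != 0)%N ->
  est_err w t.+1 =
  est_err w t + (grad_incr w t (w k) - n%:R^-1 *: \sum_i grad_incr w t i).
Proof.
move=> kE nmod; have insub_k : insub t.+1 = Some k by rewrite -kE valK.
rewrite /est_err ada_estS (negbTE nmod) insub_k /grad_incr -full_gradB.
by apply/rowP => j; rewrite !mxE; ring.
Qed.

Lemma sum_sq_err_step t : (t.+1 < T)%N -> (t.+1 %% n != 0)%N ->
  sum_sq_err t.+1 <= sum_sq_err t + L ^+ 2 * sum_sq_move t.+1.
Proof.
move=> ltT nmod; pose k := Ordinal ltT.
pose D w i := grad_incr w t i - n%:R^-1 *: \sum_j grad_incr w t j.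
have x_resample w j s : (s <= t.+1)%N -> x (resample w k j) s = x w s.
  by move=> le_st; apply: ada_x_resample.
have D_resample w j i : D (resample w k j) i = D w i.
  by rewrite /D /grad_incr !x_resample //; under eq_bigr do rewrite !x_resample //.
have err_resample w j : est_err (resample w k j) t = est_err w t.
  by rewrite /est_err x_resample // /ada_est ada_run_resample.
(* [est_err w t] and [D w] do not depend on the fresh index [w k], so the cross
   term averages [D w i] over [i], which gives 0. *)
have cross : \sum_(w : W) edot (est_err w t) (D w (w k)) = 0.
  have /= -> := @sum_resampled R n T k (fun w i => edot (est_err w t) (D w i)) n_gt0.
    rewrite big1 ?mulr0 // => w _; rewrite -edot_sumr sumrB sumr_const card_ord.
    by rewrite -scaler_nat scalerA mulfV ?pnatr_eq0 -?lt0n // scale1r subrr edot0r.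
  by move=> w j i; rewrite err_resample D_resample.
have quad : \sum_(w : W) enorm (D w (w k)) ^+ 2 <= L ^+ 2 * sum_sq_move t.+1.
  have /= -> := @sum_resampled R n T k (fun w i => enorm (D w i) ^+ 2) n_gt0.
    rewrite /sum_sq_move !mulr_sumr; apply: ler_sum => w _.
    rewrite ler_pdivrMl ?ltr0n //; apply: le_trans (sum_enorm_sqr_centered _) _.
    rewrite mulr_natl -[n in _ *+ n]card_ord -sumr_const; apply: ler_sum => i _.
    have lip := g_lip i (x w t.+1) (x w t).
    by rewrite -exprMn lerXn2r ?nnegrE ?enorm_ge0 // (le_trans (enorm_ge0 _) lip).
  by move=> w j i; rewrite D_resample.
rewrite /sum_sq_err; under eq_bigr => w _ do rewrite (est_errS _ (k := k)) // enorm_sqrD.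
by rewrite !big_split /= -mulr_sumr cross mulr0 addr0 lerD2l.
Qed.

Lemma sum_sq_err_restart t : (t %% n == 0)%N -> sum_sq_err t = 0.
Proof.
by move=> h; rewrite /sum_sq_err big1 // => w _; rewrite est_err_restart // enorm0 expr2 mulr0.
Qed.

Lemma sum_sq_move_ge0 t : 0 <= sum_sq_move t.
Proof. by apply: sumr_ge0 => w _; exact: sqr_ge0. Qed.

Lemma sum_sq_err_le t : (t < T)%N ->
  sum_sq_err t <= L ^+ 2 * \sum_(k < t %% n) sum_sq_move (t - k).
Proof.
elim: t => [_|t IH ltT]; first by rewrite sum_sq_err_restart ?mod0n ?big_ord0 ?mulr0.
have [restart|nmod] := eqVneq (t.+1 %% n)%N 0%N.
  by rewrite sum_sq_err_restart restart ?big_ord0 ?mulr0.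
apply: le_trans (sum_sq_err_step ltT nmod) _.
have -> : (t.+1 %% n = (t %% n).+1)%N by move: nmod; rewrite modnS; case: (n %| t.+1)%N.
rewrite big_ord_recl subn0 mulrDr addrC lerD2l.
under eq_bigr => k _ do rewrite /bump /= subSS.
exact: IH (ltnW ltT).
Qed.

Lemma sum_sq_err_total :
  \sum_(t < T) sum_sq_err t <= L ^+ 2 * n%:R * \sum_(t < T) sum_sq_move t.
Proof.
have window t : \sum_(k < t %% n) sum_sq_move (t - k) <=
    \sum_(k < n) (if (k <= t)%N then sum_sq_move (t - k) else 0).
  rewrite (big_ord_widen n (fun k => sum_sq_move (t - k)) (ltnW (ltn_pmod t n_gt0))).
  rewrite big_mkcond /=; apply: ler_sum => k _; case: ifP => [k_lt|_].
    by rewrite (leq_trans (ltnW k_lt) (leq_mod t n)).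
  by case: ifP => _; rewrite ?sum_sq_move_ge0.
apply: (@le_trans _ _ (L ^+ 2 * \sum_(t < T) \sum_(k < n)
    (if (k <= t)%N then sum_sq_move (t - k) else 0))).
  rewrite mulr_sumr; apply: ler_sum => t _; apply: le_trans (sum_sq_err_le (ltn_ord t)) _.
  by rewrite ler_wpM2l ?sqr_ge0 ?window.
rewrite -mulrA ler_wpM2l ?sqr_ge0 // exchange_big /=.
rewrite -[n in n%:R * _]card_ord mulr_natl -sumr_const.
by apply: ler_sum => k _; apply: sum_shift_le; exact: sum_sq_move_ge0.
Qed.

End Variance.

Section Trajectory.
Variables (R : realType) (d n T : nat) (g : 'I_n -> 'rV[R]_d -> 'rV[R]_d)
  (x0 : 'rV[R]_d) (beta0 G0 L : R).
Hypothesis n_gt0 : (0 < n)%N.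
Hypothesis g_lip : forall i x y, enorm (g i x - g i y) <= L * enorm (x - y).
Hypothesis L_ge0 : 0 <= L.
Hypothesis beta0_gt0 : 0 < beta0.
Hypothesis G0_gt0 : 0 < G0.
Local Notation W := {ffun 'I_T -> 'I_n}.
Local Notation x := (ada_x g x0 beta0 G0).
Local Notation est := (ada_est g x0 beta0 G0).
Local Notation S := (ada_sum_sq g x0 beta0 G0).
Implicit Types (w : W) (t m : nat).

(* The offset in the step size [1 / (n^(1/4) beta0 sqrt (c + S))]. *)
Let c := Num.sqrt n%:R * G0 ^+ 2.

Lemma sqrt_n_ge1 : 1 <= Num.sqrt n%:R :> R.
Proof. by rewrite -[leLHS]sqrtr1; apply: ler_wsqrtr; rewrite ler1n. Qed.

Lemma G0_sqr_le_c : G0 ^+ 2 <= c.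
Proof. by rewrite ler_peMl ?sqrt_n_ge1 ?sqr_ge0. Qed.

Lemma c_gt0 : 0 < c.
Proof. exact: lt_le_trans (exprn_gt0 _ G0_gt0) G0_sqr_le_c. Qed.

Lemma ada_sum_sq_ge0 w t : 0 <= S w t.
Proof. by rewrite ada_sum_sqE sumr_ge0 // => s _; rewrite sqr_ge0. Qed.

Lemma full_grad_lip y z : enorm (full_grad g y - full_grad g z) <= L * enorm (y - z).
Proof.
rewrite full_gradB enormZ ger0_norm ?invr_ge0 // ler_pdivrMl ?ltr0n //.
apply: le_trans (ler_enorm_sum _ _ _) _.
rewrite mulr_natl -[n in _ *+ n]card_ord -sumr_const.
by apply: ler_sum => i _; exact: g_lip.
Qed.

Lemma ada_step_sqr w t : enorm (x w t.+1 - x w t) ^+ 2 =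
  (Num.sqrt n%:R * beta0 ^+ 2)^-1 * (enorm (est w t) ^+ 2 / (c + S w t)).
Proof.
have cS_gt0 : 0 < c + S w t by rewrite ltr_wpDr ?ada_sum_sq_ge0 ?c_gt0.
rewrite ada_xS addrAC subrr add0r enormN enormZ exprMn real_normK ?num_real //.
rewrite /ada_gamma div1r.
rewrite exprVn !exprMn powR_quarter_sqr ?ler0n // sqr_sqrtr ?(ltW cS_gt0) //.
by rewrite -/c; field; rewrite ?gt_eqF ?sqrtr_gt0 ?ltr0n.
Qed.

Definition path_len w m := \sum_(s < m) enorm (x w s.+1 - x w s).

Lemma path_len_mono w m m' : (m <= m')%N -> path_len w m <= path_len w m'.
Proof.
move=> le_mm'; rewrite /path_len.
rewrite (big_ord_widen m' (fun s => enorm (x w s.+1 - x w s)) le_mm').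
by rewrite big_mkcond /=; apply: ler_sum => s _; case: ifP; rewrite ?enorm_ge0.
Qed.

Lemma enorm_x_sub_x0 w m : enorm (x w m - x0) <= path_len w m.
Proof.
rewrite -[x0]/(x w 0) -(telescope_sumr (fun s => x w s) (leq0n m)) big_mkord.
exact: ler_enorm_sum.
Qed.

Lemma enorm_est_le w m :
  enorm (est w m) <= enorm (full_grad g x0) + L * path_len w m.
Proof.
have restart_le m' :
    enorm (full_grad g (x w m')) <= enorm (full_grad g x0) + L * path_len w m'.
  rewrite -[full_grad g (x w m')](subrK (full_grad g x0)) addrC.
  apply: le_trans (enormD _ _) _; rewrite lerD2l (le_trans (full_grad_lip _ _)) //.
  by rewrite ler_wpM2l ?enorm_x_sub_x0.
elim: m => [|m IH]; first exact: (restart_le 0%N).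
rewrite ada_estS; case: ifP => _; first exact: restart_le.
case: insubP => [k _ _|_]; last exact: restart_le.
rewrite /path_len big_ord_recr /= -/(path_len w m) mulrDr addrA addrC.
by apply: le_trans (enormD _ _) _; rewrite lerD ?g_lip.
Qed.

Definition ada_potential w := \sum_(t < T) enorm (est w t) ^+ 2 / (c + S w t).

Lemma ada_potential_le_ln w : (1 <= T)%N -> ada_potential w <= ln (1 + S w T.-1 / c).
Proof.
move=> T_ge1; pose b k := c + \sum_(s < k) enorm (est w s) ^+ 2.
have bS k : b k.+1 = c + S w k by rewrite /b ada_sum_sqE.
have bD k : b k.+1 - b k = enorm (est w k) ^+ 2 by rewrite /b big_ord_recr /=; ring.
have b0 : b 0%N = c by rewrite /b big_ord0 addr0.
have bT : b T / b 0%N = 1 + S w T.-1 / c.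
  by rewrite b0 /b ada_sum_sqE prednK // mulrDl mulfV // gt_eqF ?c_gt0.
have -> : ada_potential w = \sum_(k < T) (b k.+1 - b k) / b k.+1.
  by apply: eq_bigr => k _; rewrite bD bS.
rewrite -bT; apply: sum_incr_div_le_ln => [|k]; first by rewrite b0 c_gt0.
by rewrite -subr_ge0 bD sqr_ge0.
Qed.

Lemma ada_ratio_ge0 w t : 0 <= enorm (est w t) ^+ 2 / (c + S w t).
Proof. by rewrite divr_ge0 ?sqr_ge0 ?addr_ge0 ?ada_sum_sq_ge0 ?(ltW c_gt0). Qed.

Lemma ada_potential_ge0 w : 0 <= ada_potential w.
Proof. by apply: sumr_ge0 => t _; exact: ada_ratio_ge0. Qed.

Lemma path_len_le w : path_len w T <= beta0^-1 * Num.sqrt (T%:R * ada_potential w).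
Proof.
pose k := (Num.sqrt n%:R * beta0 ^+ 2)^-1.
have k_le : k <= beta0^-1 ^+ 2.
  rewrite /k invfM exprVn ler_piMl ?invr_ge0 ?sqr_ge0 // invf_le1 ?sqrt_n_ge1 //.
  exact: lt_le_trans ltr01 sqrt_n_ge1.
have step t :
    enorm (x w t.+1 - x w t) = Num.sqrt (k * (enorm (est w t) ^+ 2 / (c + S w t))).
  by rewrite -ada_step_sqr sqrtr_sqr ger0_norm ?enorm_ge0.
rewrite /path_len; under eq_bigr => t _ do rewrite step.
have k_ge0 : 0 <= k by rewrite invr_ge0 mulr_ge0 ?sqrtr_ge0 ?sqr_ge0.
apply: le_trans (sum_sqrt_le _) _ => [t|]; first by rewrite mulr_ge0 ?ada_ratio_ge0.
rewrite (card_ord T) -mulr_sumr -/(ada_potential w).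
rewrite -[beta0^-1](@ger0_norm _ _) ?invr_ge0 ?(ltW beta0_gt0) //.
rewrite -sqrtr_sqr -sqrtrM ?sqr_ge0 //.
by apply: ler_wsqrtr; rewrite mulrCA ler_wpM2r ?mulr_ge0 ?ada_potential_ge0.
Qed.

Lemma ada_sum_sq_le w : (1 <= T)%N -> S w T.-1 <=
  T%:R * (enorm (full_grad g x0) + L / beta0 * Num.sqrt (T%:R * ada_potential w)) ^+ 2.
Proof.
move=> T_ge1; set M := _ + _.
have est_le t : (t < T)%N -> enorm (est w t) <= M.
  move=> lt_tT; apply: le_trans (enorm_est_le w t) _; rewrite lerD2l -mulrA ler_wpM2l //.
  exact: le_trans (path_len_mono w (ltnW lt_tT)) (path_len_le w).
have M_ge0 : 0 <= M := le_trans (enorm_ge0 _) (est_le 0%N T_ge1).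
rewrite ada_sum_sqE prednK // -[X in X%:R * _](card_ord T) mulr_natl -sumr_const.
by apply: ler_sum => t _; rewrite lerXn2r ?nnegrE ?enorm_ge0 ?est_le.
Qed.

Lemma ada_potential_le w : (1 <= T)%N -> ada_potential w <=
  8 * ln (1 + n%:R * T%:R * (L / (beta0 * G0) + enorm (full_grad g x0) / G0)).
Proof.
move=> T_ge1; set a := enorm (full_grad g x0) / G0; set b := L / (beta0 * G0).
have a_ge0 : 0 <= a by rewrite divr_ge0 ?enorm_ge0 ?ltW.
have b_ge0 : 0 <= b by rewrite divr_ge0 // ltW // mulr_gt0.
have T_ge1' : 1 <= T%:R :> R by rewrite ler1n.
have n_ge1 : 1 <= n%:R :> R by rewrite ler1n.
have X_ge0 : 0 <= S w T.-1 / c by rewrite divr_ge0 ?ada_sum_sq_ge0 ?(ltW c_gt0).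
have pot_le := ada_potential_le_ln w T_ge1.
apply: (le_trans pot_le); apply: ln_self_bound => //; first by rewrite !mulr_ge0 ?addr_ge0.
set l := ln _ in pot_le *; have l_ge0 : 0 <= l := le_trans (ada_potential_ge0 w) pot_le.
set r := Num.sqrt (T%:R * l).
have S_le : S w T.-1 <= T%:R * (enorm (full_grad g x0) + L / beta0 * r) ^+ 2.
  have M_ge0 q : 0 <= enorm (full_grad g x0) + L / beta0 * Num.sqrt q.
    by rewrite addr_ge0 ?enorm_ge0 // mulr_ge0 ?sqrtr_ge0 // divr_ge0 // ltW.
  apply: le_trans (ada_sum_sq_le w T_ge1) _; apply: ler_wpM2l => //.
  rewrite lerXn2r ?nnegrE ?M_ge0 // lerD2l.
  apply: ler_wpM2l; first by rewrite divr_ge0 // ltW.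
  by apply: ler_wsqrtr; apply: ler_wpM2l.
have Tab_le : T%:R * (b + a) <= n%:R * T%:R * (b + a).
  by rewrite -mulrA ler_peMl // mulr_ge0 // addr_ge0.
apply: le_trans (affine_sqrt_sqr_le T_ge1' a_ge0 b_ge0 l_ge0 _ _); last 2 first.
- apply: le_trans _ Tab_le; by rewrite ler_wpM2l // lerDr.
- apply: le_trans _ Tab_le; by rewrite ler_wpM2l // lerDl.
apply: (@le_trans _ _ (S w T.-1 / G0 ^+ 2)).
  apply: ler_wpM2l; first exact: ada_sum_sq_ge0.
  by rewrite lef_pV2 ?posrE ?c_gt0 ?exprn_gt0 ?G0_sqr_le_c.
have aG0 : enorm (full_grad g x0) + L / beta0 * r = (a + b * r) * G0.
  by rewrite /a /b; field; rewrite ?gt_eqF.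
by rewrite ler_pdivrMr ?exprn_gt0 // -mulrA -exprMn -aG0.
Qed.

Lemma sum_sq_move_total : \sum_(t < T) sum_sq_move T g x0 beta0 G0 t <=
  (Num.sqrt n%:R * beta0 ^+ 2)^-1 * \sum_(w : W) ada_potential w.
Proof.
have move0 : sum_sq_move T g x0 beta0 G0 0 = 0.
  by rewrite /sum_sq_move big1 // => w _; rewrite subrr enorm0 expr2 mulr0.
apply: (@le_trans _ _ (\sum_(t < T) sum_sq_move T g x0 beta0 G0 t.+1)).
  rewrite (eq_bigr (fun t : 'I_T => if (1 <= t)%N
      then sum_sq_move T g x0 beta0 G0 (t - 1).+1 else 0)).
    apply: (sum_shift_le (F := fun t => sum_sq_move T g x0 beta0 G0 t.+1)) => t.
    exact: sum_sq_move_ge0.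
  by case=> [[|t]] //= _ _; rewrite subn1.
rewrite /sum_sq_move exchange_big mulr_sumr; apply/ler_sum => w _.
by rewrite /ada_potential mulr_sumr; apply: ler_sum => t _; rewrite ada_step_sqr.
Qed.

End Trajectory.

Section ErrorBound.
Variables (R : realType) (d n T : nat) (g : 'I_n -> 'rV[R]_d -> 'rV[R]_d)
  (x0 : 'rV[R]_d) (beta0 G0 L : R).
Hypothesis n_gt0 : (0 < n)%N.
Hypothesis T_ge1 : (1 <= T)%N.
Hypothesis g_lip : forall i x y, enorm (g i x - g i y) <= L * enorm (x - y).
Hypothesis L_ge0 : 0 <= L.
Hypothesis beta0_gt0 : 0 < beta0.
Hypothesis G0_gt0 : 0 < G0.
Local Notation W := {ffun 'I_T -> 'I_n}.
Local Notation err := (est_err g x0 beta0 G0).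
Local Notation V := (sum_sq_err T g x0 beta0 G0).

Let K := ln (1 + n%:R * T%:R * (L / (beta0 * G0) + enorm (full_grad g x0) / G0)).

Lemma sum_enorm_err_le : \sum_(w : W) \sum_(t < T) enorm (err w t) <=
  Num.sqrt (T%:R * (#|W|%:R * \sum_(t < T) V t)).
Proof.
rewrite exchange_big /= mulr_sumr.
apply: (@le_trans _ _ (\sum_(t < T) Num.sqrt (#|W|%:R * V t))).
  apply: ler_sum => t _.
  under eq_bigr => w _ do rewrite -[enorm _]ger0_norm ?enorm_ge0 // -sqrtr_sqr.
  by apply: sum_sqrt_le => w; exact: sqr_ge0.
rewrite -[X in X%:R * _](card_ord T); apply: sum_sqrt_le => t.
by rewrite mulr_ge0 // sumr_ge0 // => w _; exact: sqr_ge0.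
Qed.

Lemma sum_sq_err_le_ln :
  \sum_(t < T) V t <= #|W|%:R * (8 * L ^+ 2 * Num.sqrt n%:R / beta0 ^+ 2 * K).
Proof.
have sqrt_n_gt0 : 0 < Num.sqrt n%:R :> R by rewrite sqrtr_gt0 ltr0n.
apply: le_trans (sum_sq_err_total T x0 beta0 G0 n_gt0 g_lip) _.
apply: le_trans (ler_wpM2l _ (sum_sq_move_total T g x0 n_gt0 beta0_gt0 G0_gt0)) _.
  by rewrite mulr_ge0 ?sqr_ge0.
have pot_le : \sum_(w : W) ada_potential g x0 beta0 G0 w <= #|W|%:R * (8 * K).
  rewrite mulr_natl -sumr_const; apply: ler_sum => w _.
  exact: ada_potential_le n_gt0 g_lip L_ge0 beta0_gt0 G0_gt0 w T_ge1.
apply: le_trans (ler_wpM2l _ (ler_wpM2l _ pot_le)) _.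
- by rewrite mulr_ge0 ?sqr_ge0.
- by rewrite invr_ge0 mulr_ge0 ?sqr_ge0 ?ltW.
rewrite [leLHS](_ : _ = #|W|%:R * (8 * L ^+ 2 * Num.sqrt n%:R / beta0 ^+ 2 * K)) //.
by rewrite -{1}[n%:R](@sqr_sqrtr R) ?ler0n //; field; rewrite !gt_eqF.
Qed.

Lemma ada_spider_error_bound :
  unif_expect (fun w : W => \sum_(t < T)
      enorm (ada_est g x0 beta0 G0 w t - full_grad g (ada_x g x0 beta0 G0 w t)))
  <= 3 * (L * n%:R `^ (4^-1) * Num.sqrt T%:R / beta0) * Num.sqrt K.
Proof.
have W_gt0 : 0 < #|W|%:R :> R by rewrite ltr0n card_ffun card_ord expn_gt0 n_gt0.
have K_ge0 : 0 <= K.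
  apply: ln_ge0; rewrite lerDl !mulr_ge0 // addr_ge0 // divr_ge0 ?enorm_ge0 //.
    by rewrite mulr_ge0 // ltW.
  exact: ltW.
set B := 3 * _.
have B_ge0 : 0 <= B by rewrite mulr_ge0 // divr_ge0 ?mulr_ge0 ?sqrtr_ge0 ?powR_ge0 // ltW.
rewrite /unif_expect ler_pdivrMl //; apply: le_trans sum_enorm_err_le _.
rewrite [leRHS]mulrA -(ger0_norm (mulr_ge0 (ltW W_gt0) B_ge0)).
rewrite -sqrtr_sqr -sqrtrM ?sqr_ge0 //.
apply: ler_wsqrtr; apply: le_trans (ler_wpM2l _ (ler_wpM2l _ sum_sq_err_le_ln)) _ => //.
pose X := #|W|%:R ^+ 2 * (L ^+ 2 * Num.sqrt n%:R * T%:R / beta0 ^+ 2 * K).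
have X_ge0 : 0 <= X.
  by rewrite mulr_ge0 ?sqr_ge0 // mulr_ge0 // divr_ge0 ?sqr_ge0 // !mulr_ge0 ?sqr_ge0.
rewrite [leLHS](_ : _ = 8 * X); last by rewrite /X; field; rewrite gt_eqF.
rewrite [leRHS](_ : _ = 9 * X); last first.
  by rewrite /X /B !exprMn powR_quarter_sqr ?sqr_sqrtr //; field; rewrite gt_eqF.
lra.
Qed.

End ErrorBound.

Theorem lemma3 :
  forall R : realType, exists C : R, 0 < C /\
  forall (d n T : nat) (L : R)
    (f : 'I_n -> 'rV[R]_d -> R)
    (g : 'I_n -> 'rV[R]_d -> 'rV[R]_d)
    (x0 : 'rV[R]_d) (beta0 G0 : R),
    (0 < n)%N -> (1 <= T)%N -> 0 <= L -> 0 < beta0 -> 0 < G0 ->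
    (forall i x, differentiable (f i) x /\
       forall h, 'd (f i) x h = edot (g i x) h) ->
    (forall i x y, enorm (g i x - g i y) <= L * enorm (x - y)) ->
    unif_expect (fun w : {ffun 'I_T -> 'I_n} => \sum_(t < T)
        enorm (ada_est g x0 beta0 G0 w t
               - full_grad g (ada_x g x0 beta0 G0 w t)))
    <= C * (L * n%:R `^ (4^-1) * Num.sqrt T%:R / beta0)
         * Num.sqrt (ln (1 + n%:R * T%:R *
              (L / (beta0 * G0) + enorm (full_grad g x0) / G0))).
Proof.
move=> R; exists 3; split=> // d n T L f g x0 beta0 G0.
move=> n_gt0 T_ge1 L_ge0 beta0_gt0 G0_gt0 _ g_lip.
exact: ada_spider_error_bound.
Qed.
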